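(* Consider the mining game with $N\ge2$ miners, costs $0<c_1\le\dots\le c_N$, reward $R>0$ and capacity $\gamma\ge0$, at parameter values where the number $n$ of active miners does not change under small perturbations of the parameters. For an active miner $i$, $$\frac{\partial h_i^*}{\partial\gamma}=\Delta^{(\gamma)}_{i,1}+\Delta^{(\gamma)}_{i,2},\quad \Delta^{(\gamma)}_{i,1}<0,\quad \Delta^{(\gamma)}_{i,2}>0\iff \frac{h_i^*}{H^*}<\frac12,$$ $$\frac{\partial h_i^*}{\partial R}=\Delta^{(R)}_{i,1}+\Delta^{(R)}_{i,2}>0,\quad \Delta^{(R)}_{i,1}>0,\quad \Delta^{(R)}_{i,2}<0\iff \frac{h_i^*}{H^*}<\frac12.$$ Furthermore, the derivatives $\frac{\partial}{\partial\gamma}\frac{h_i^*}{H^*}$ and $\frac{\partial}{\partial R}\frac{h_i^*}{H^*}$ are increasing in $i$ for $1\le i\le n$.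
   Context: Mining game: $N\ge2$ miners with costs-per-hash $0<c_1\le\dots\le c_N$; each miner $i$ chooses $h_i\ge0$, $H=\sum_j h_j$, payoff $\frac{h_i}{H}R-c_ih_i-\frac{\gamma}{2}h_i^2$ if $H>0$ and $0$ if $H=0$, with $R>0$, $\gamma\ge0$. The pure Nash equilibrium $h^*$ is unique; its active miners ($h_i^*>0$) are $1,\dots,n$ for some $2\le n\le N$, and with $c^{(n)}=\sum_{i=1}^nc_i$ one has $H^*=g(c_1,\dots,c_n,\gamma,R):=\frac{\sqrt{(c^{(n)})^2+4(n-1)R\gamma}-c^{(n)}}{2\gamma}$ for $\gamma>0$ (and $(n-1)R/c^{(n)}$ for $\gamma=0$), and $h_i^*=f_i(c_i,\gamma,R,H^* )$ for $i\le n$ where $f_i(c,\gamma,R,x):=x\frac{R-cx}{R+\gamma x^2}$. Derivatives are of these closed forms with $n$ held fixed. Definitions: $\Delta^{(\gamma)}_{i,1}:=\frac{\partial f_i}{\partial\gamma}$ and $\Delta^{(R)}_{i,1}:=\frac{\partial f_i}{\partial R}$ (with the fourth argument $x=H^*$ held fixed), $\Delta^{(\gamma)}_{i,2}:=\frac{\partial f_i}{\partial x}\big|_{x=H^*}\frac{\partial g}{\partial\gamma}$ and $\Delta^{(R)}_{i,2}:=\frac{\partial f_i}{\partial x}\big|_{x=H^*}\frac{\partial g}{\partial R}$. A sequence is increasing if $x_i\le x_{i+1}$ for all $i$. *)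

From Stdlib Require Import Reals.
From Coquelicot Require Import Coquelicot.
Open Scope R_scope.

(* Miners are indexed 0,...,N-1 (miner i of the paper is index i-1). *)

Fixpoint sumN (f : nat -> R) (k : nat) : R :=
  match k with
  | O => 0
  | S k' => sumN f k' + f k'
  end.

Definition sorted_costs (N : nat) (c : nat -> R) : Prop :=
  0 < c 0%nat /\ forall i : nat, (i + 1 < N)%nat -> c i <= c (i + 1)%nat.

Definition Htot (N : nat) (h : nat -> R) : R := sumN h N.

Definition payoff (N : nat) (c : nat -> R) (gamma Rw : R) (h : nat -> R)
    (i : nat) : R :=
  if Rlt_dec 0 (Htot N h)
  then h i / Htot N h * Rw - c i * h i - gamma / 2 * h i ^ 2
  else 0.

Definition upd (h : nat -> R) (i : nat) (y : R) : nat -> R :=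
  fun j => if Nat.eqb j i then y else h j.

Definition is_NE (N : nat) (c : nat -> R) (gamma Rw : R) (h : nat -> R) : Prop :=
  (forall j : nat, (j < N)%nat -> 0 <= h j) /\
  forall i : nat, (i < N)%nat -> forall y : R, 0 <= y ->
    payoff N c gamma Rw (upd h i y) i <= payoff N c gamma Rw h i.

(* closed form g(c_1..c_n, gamma, R) for H^*; the gamma <> 0 branch is the
   paper's gamma > 0 formula (also used for gamma < 0, so that a two-sided
   derivative in gamma makes sense at gamma = 0; it is the analytic
   continuation of the paper's function). *)
Definition gH (c : nat -> R) (n : nat) (gamma Rw : R) : R :=
  let cn := sumN c n in
  if Req_EM_T gamma 0
  then (INR n - 1) * Rw / cn
  else (sqrt (cn ^ 2 + 4 * (INR n - 1) * Rw * gamma) - cn) / (2 * gamma).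

Definition fh (ci gamma Rw x : R) : R :=
  x * (Rw - ci * x) / (Rw + gamma * x ^ 2).

(* closed form h_i^* as a function of (gamma, R), with n held fixed *)
Definition hstar (c : nat -> R) (n i : nat) (gamma Rw : R) : R :=
  fh (c i) gamma Rw (gH c n gamma Rw).

Definition Dg1 (c : nat -> R) (i : nat) (gamma Rw Hs : R) : R :=
  Derive (fun g' => fh (c i) g' Rw Hs) gamma.
Definition Dg2 (c : nat -> R) (n i : nat) (gamma Rw Hs : R) : R :=
  Derive (fun x => fh (c i) gamma Rw x) Hs *
  Derive (fun g' => gH c n g' Rw) gamma.
Definition DR1 (c : nat -> R) (i : nat) (gamma Rw Hs : R) : R :=
  Derive (fun r' => fh (c i) gamma r' Hs) Rw.
Definition DR2 (c : nat -> R) (n i : nat) (gamma Rw Hs : R) : R :=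
  Derive (fun x => fh (c i) gamma Rw x) Hs *
  Derive (fun r' => gH c n gamma r') Rw.

From Stdlib Require Import Reals Lra Lia Psatz.
From Coquelicot Require Import Coquelicot.
Open Scope R_scope.

(* At an equilibrium with n active miners, the first-order condition of
   active miner i reads h_i (R + gamma H^2) = H R - c_i H^2, i.e. h_i = f_i(H);
   summing over the active miners gives the quadratic
   gamma H^2 + c^(n) H = (n-1) R, whose positive root is g. Written in the
   rationalized form 2 (n-1) R / (sqrt(c^(n)^2 + 4 (n-1) R gamma) + c^(n)),
   g is smooth in gamma across 0, with dg/dgamma = -H^2 / (2 gamma H + c^(n))
   and dg/dR = (n-1) / (2 gamma H + c^(n)). The sign of df_i/dx is that of
   R - 2 c_i H - gamma H^2, which is negative exactly when h_i / H < 1/2.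
   The derivatives of the share h_i / H = (R - c_i H) / (R + gamma H^2) are
   affine in c_i with a nonnegative slope, hence increasing in i. *)

Lemma sumN_upd_out (f : nat -> R) i y k :
  (k <= i)%nat -> sumN (upd f i y) k = sumN f k.
Proof.
  induction k as [|k IH]; intros Hk; simpl; [reflexivity|].
  rewrite IH by lia. unfold upd.
  destruct (Nat.eqb_spec k i); [lia | reflexivity].
Qed.

Lemma sumN_upd (f : nat -> R) i y k :
  (i < k)%nat -> sumN (upd f i y) k = sumN f k - f i + y.
Proof.
  induction k as [|k IH]; intros Hk; [lia|]. simpl.
  destruct (Nat.eq_dec i k) as [->|Hne].
  - rewrite sumN_upd_out by lia. unfold upd. rewrite Nat.eqb_refl. ring.
  - rewrite IH by lia. unfold upd.
    destruct (Nat.eqb_spec k i); [lia | ring].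
Qed.

Lemma sumN_nonneg (f : nat -> R) k :
  (forall i, (i < k)%nat -> 0 <= f i) -> 0 <= sumN f k.
Proof.
  induction k as [|k IH]; intros Hf; simpl; [lra|].
  assert (0 <= f k) by (apply Hf; lia).
  assert (0 <= sumN f k) by (apply IH; intros; apply Hf; lia).
  lra.
Qed.

Lemma sumN_ge_term (f : nat -> R) k j :
  (forall i, (i < k)%nat -> 0 <= f i) -> (j < k)%nat -> f j <= sumN f k.
Proof.
  induction k as [|k IH]; intros Hf Hj; [lia|]. simpl.
  assert (0 <= f k) by (apply Hf; lia).
  destruct (Nat.eq_dec j k) as [->|Hne].
  - assert (0 <= sumN f k) by (apply sumN_nonneg; intros; apply Hf; lia). lra.
  - assert (f j <= sumN f k) by (apply IH; [intros; apply Hf|]; lia). lra.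
Qed.

Lemma sumN_zero_tail (f : nat -> R) n m :
  (n <= m)%nat -> (forall i, (n <= i < m)%nat -> f i = 0) -> sumN f m = sumN f n.
Proof.
  induction m as [|m IH]; intros Hnm Hz.
  - replace n with 0%nat by lia. reflexivity.
  - destruct (Nat.eq_dec n (S m)) as [->|Hne]; [reflexivity|].
    simpl. rewrite (Hz m) by lia.
    rewrite IH; [ring | lia | intros; apply Hz; lia].
Qed.

Lemma sumN_affine (f c : nat -> R) K A B n :
  (forall i, (i < n)%nat -> f i * K = A - c i * B) ->
  sumN f n * K = INR n * A - sumN c n * B.
Proof.
  induction n as [|n IH]; intros Hf; simpl sumN; [simpl; ring|].
  rewrite S_INR, Rmult_plus_distr_r, IH by (intros; apply Hf; lia).
  rewrite Hf by lia. ring.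
Qed.

Lemma sorted_costs_pos N c : sorted_costs N c -> forall i, (i < N)%nat -> 0 < c i.
Proof.
  intros [Hc0 Hmono]. induction i as [|i IH]; intros Hi; [exact Hc0|].
  assert (c i <= c (i + 1)%nat) by (apply Hmono; lia).
  replace (S i) with (i + 1)%nat by lia.
  assert (0 < c i) by (apply IH; lia). lra.
Qed.

Lemma payoff_upd N c gamma Rw h i y :
  (i < N)%nat -> 0 < Htot N h - h i + y ->
  payoff N c gamma Rw (upd h i y) i
  = y / (Htot N h - h i + y) * Rw - c i * y - gamma / 2 * y ^ 2.
Proof.
  intros Hi Hpos. unfold payoff, Htot in *.
  rewrite sumN_upd by exact Hi. unfold upd. rewrite Nat.eqb_refl.
  destruct (Rlt_dec 0 (sumN h N - h i + y)); [reflexivity | lra].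
Qed.

Lemma NE_first_order N c gamma Rw h i :
  is_NE N c gamma Rw h -> (i < N)%nat -> 0 < h i -> 0 < Htot N h - h i ->
  Rw * (Htot N h - h i) / Htot N h ^ 2 = c i + gamma * h i.
Proof.
  intros [_ Hbest] Hi Hhi HS.
  set (u := fun y => payoff N c gamma Rw (upd h i y) i).
  assert (Hu_near : locally (h i) (fun y =>
    y / (Htot N h - h i + y) * Rw - c i * y - gamma / 2 * y ^ 2 = u y)).
  { exists (mkposreal _ Hhi). intros y Hy.
    change (Rabs (y - h i) < h i) in Hy. apply Rabs_def2 in Hy.
    symmetry. apply payoff_upd; [exact Hi | lra]. }
  assert (Hu : is_derive u (h i)
    (Rw * (Htot N h - h i) / Htot N h ^ 2 - c i - gamma * h i)).
  { apply (is_derive_ext_loc _ _ _ _ Hu_near). auto_derive; [lra|].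
    replace (Htot N h - h i + h i) with (Htot N h) by ring. field. lra. }
  apply is_derive_Reals in Hu.
  assert (Hmax : forall y, 0 < y -> y < 2 * h i -> u y <= u (h i)).
  { intros y Hy _. replace (u (h i)) with (payoff N c gamma Rw h i).
    - apply Hbest; [exact Hi | lra].
    - unfold u. rewrite payoff_upd by (exact Hi || lra). unfold payoff.
      destruct (Rlt_dec 0 (Htot N h)); [|lra].
      replace (Htot N h - h i + h i) with (Htot N h) by ring. reflexivity. }
  assert (Hzero := deriv_maximum u 0 (2 * h i) (h i) (exist _ _ Hu) Hhi ltac:(lra) Hmax).
  rewrite (derive_pt_eq_0 _ _ _ _ Hu) in Hzero.
  lra.
Qed.

Section Equilibrium.

Variables (N n : nat) (c : nat -> R) (gamma Rw : R) (h : nat -> R).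
Hypotheses (Hn2 : (2 <= n)%nat) (HnN : (n <= N)%nat) (HR : 0 < Rw) (Hgam : 0 <= gamma)
  (HNE : is_NE N c gamma Rw h)
  (Hact : forall i : nat, (i < N)%nat -> (0 < h i <-> (i < n)%nat)).

Lemma active_pos i : (i < n)%nat -> 0 < h i.
Proof. intros Hi. apply Hact; lia. Qed.

Lemma active_lt_Htot i : (i < n)%nat -> h i < Htot N h.
Proof.
  intros Hi. destruct HNE as [Hnn _].
  set (j := if Nat.eqb i 0 then 1%nat else 0%nat).
  assert (Hj : (j < n)%nat /\ j <> i) by (unfold j; destruct (Nat.eqb_spec i 0); lia).
  assert (Hle : upd h i 0 j <= sumN (upd h i 0) N).
  { apply sumN_ge_term; [|lia]. intros k Hk. unfold upd.
    destruct (Nat.eqb k i); [lra | apply Hnn; lia]. }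
  unfold upd at 1 in Hle. rewrite sumN_upd in Hle by lia.
  destruct (Nat.eqb_spec j i); [lia|].
  assert (0 < h j) by (apply active_pos; lia).
  unfold Htot. lra.
Qed.

Lemma Htot_pos : 0 < Htot N h.
Proof.
  assert (0 < h 0%nat) by (apply active_pos; lia).
  assert (h 0%nat < Htot N h) by (apply active_lt_Htot; lia).
  lra.
Qed.

Lemma active_balance i : (i < n)%nat ->
  h i * (Rw + gamma * Htot N h ^ 2) = Htot N h * Rw - c i * Htot N h ^ 2.
Proof.
  intros Hi.
  assert (Hfoc := NE_first_order N c gamma Rw h i HNE ltac:(lia) (active_pos i Hi)).
  assert (Hlt := active_lt_Htot i Hi). assert (HH := Htot_pos).
  assert (E : Rw * (Htot N h - h i) = (c i + gamma * h i) * Htot N h ^ 2)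
    by (rewrite <- Hfoc by lra; field; lra).
  nra.
Qed.

Lemma active_fh i : (i < n)%nat -> h i = fh (c i) gamma Rw (Htot N h).
Proof.
  intros Hi. assert (Hb := active_balance i Hi). assert (HH := Htot_pos).
  assert (0 < Rw + gamma * Htot N h ^ 2) by nra.
  unfold fh. apply (Rmult_eq_reg_r (Rw + gamma * Htot N h ^ 2)); [|lra].
  rewrite Hb. field. lra.
Qed.

Lemma active_cost_lt i : (i < n)%nat -> c i * Htot N h < Rw.
Proof.
  intros Hi. assert (Hb := active_balance i Hi).
  assert (Hh := active_pos i Hi). assert (HH := Htot_pos).
  assert (0 < h i * (Rw + gamma * Htot N h ^ 2)) by (apply Rmult_lt_0_compat; nra).
  nra.
Qed.

Lemma Htot_active : Htot N h = sumN h n.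
Proof.
  apply sumN_zero_tail; [exact HnN|]. intros i Hi.
  destruct HNE as [Hnn _].
  destruct (Rle_lt_or_eq_dec 0 (h i) (Hnn i ltac:(lia))) as [Hp|Hz]; [|lra].
  apply (Hact i) in Hp; lia.
Qed.

Lemma Htot_quadratic :
  gamma * Htot N h ^ 2 + sumN c n * Htot N h = (INR n - 1) * Rw.
Proof.
  assert (E := sumN_affine h c _ _ _ n active_balance).
  rewrite <- Htot_active in E. assert (HH := Htot_pos).
  apply (Rmult_eq_reg_l (Htot N h)); [nra | lra].
Qed.

End Equilibrium.

(* The positive root of [g x^2 + C x = b r], rationalized so that it needs
   no case split at [g = 0]. *)
Definition pos_root (b C g r : R) : R := 2 * b * r / (sqrt (C ^ 2 + 4 * b * r * g) + C).

Lemma gH_pos_root c n g r :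
  0 < sumN c n -> 0 <= sumN c n ^ 2 + 4 * (INR n - 1) * r * g ->
  gH c n g r = pos_root (INR n - 1) (sumN c n) g r.
Proof.
  intros HC Hdisc. unfold gH, pos_root.
  set (C := sumN c n) in *. set (b := INR n - 1) in *.
  assert (Hs := sqrt_pos (C ^ 2 + 4 * b * r * g)).
  assert (Hs2 := sqrt_sqrt (C ^ 2 + 4 * b * r * g) Hdisc).
  destruct (Req_EM_T g 0) as [->|Hg].
  - replace (C ^ 2 + 4 * b * r * 0) with (C ^ 2) by ring.
    rewrite sqrt_pow2 by lra. field. lra.
  - set (s := sqrt (C ^ 2 + 4 * b * r * g)) in *.
    assert (b * (s * s) = b * (C ^ 2 + 4 * b * r * g)) by (rewrite Hs2; ring).
    field_simplify_eq; [nra | split; lra].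
Qed.

Lemma is_derive_pos_root_gamma b C g r :
  0 < C -> 0 < C ^ 2 + 4 * b * r * g ->
  is_derive (fun g' => pos_root b C g' r) g
    (- pos_root b C g r ^ 2 / sqrt (C ^ 2 + 4 * b * r * g)).
Proof.
  intros HC Hdisc. assert (Hs := sqrt_lt_R0 _ Hdisc). unfold pos_root.
  auto_derive; replace (C * (C * 1)) with (C ^ 2) by ring.
  - split; [lra | split; [lra | exact I]].
  - set (s := sqrt (C ^ 2 + 4 * b * r * g)) in *. field. lra.
Qed.

Lemma is_derive_pos_root_R b C g r :
  0 < C -> 0 < C ^ 2 + 4 * b * r * g ->
  is_derive (fun r' => pos_root b C g r') r (b / sqrt (C ^ 2 + 4 * b * r * g)).
Proof.
  intros HC Hdisc. assert (Hs := sqrt_lt_R0 _ Hdisc).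
  assert (Hs2 := sqrt_sqrt _ (Rlt_le _ _ Hdisc)). unfold pos_root.
  auto_derive; replace (C * (C * 1)) with (C ^ 2) by ring.
  - split; [lra | split; [lra | exact I]].
  - set (s := sqrt (C ^ 2 + 4 * b * r * g)) in *.
    assert (b * (s * s) = b * (C ^ 2 + 4 * b * r * g)) by (rewrite Hs2; ring).
    field_simplify_eq; [nra | split; lra].
Qed.

Definition dfh_dgamma ci g r x := - x ^ 3 * (r - ci * x) / (r + g * x ^ 2) ^ 2.
Definition dfh_dx ci g r x := r * (r - 2 * ci * x - g * x ^ 2) / (r + g * x ^ 2) ^ 2.
Definition dfh_dR ci g r x := x ^ 2 * (g * x + ci) / (r + g * x ^ 2) ^ 2.

(* Derivatives of the share [fh ci g r x / x = (r - ci x) / (r + g x^2)] along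
   a path [x] of slope [x'] in [g], resp. in [r]; both are affine in [ci]. *)
Definition dshare_dgamma ci g r x x' :=
  (- r * x ^ 2 - 2 * r * g * x * x' + ci * (x ^ 3 + (g * x ^ 2 - r) * x'))
  / (r + g * x ^ 2) ^ 2.
Definition dshare_dR ci g r x x' :=
  (g * x ^ 2 - 2 * r * g * x * x' + ci * (x + (g * x ^ 2 - r) * x'))
  / (r + g * x ^ 2) ^ 2.

Lemma is_derive_fh_gamma ci g r x : r + g * x ^ 2 <> 0 ->
  is_derive (fun g' => fh ci g' r x) g (dfh_dgamma ci g r x).
Proof. intros Hd. unfold fh, dfh_dgamma. auto_derive; [exact Hd | field; exact Hd]. Qed.

Lemma is_derive_fh_x ci g r x : r + g * x ^ 2 <> 0 ->
  is_derive (fun x' => fh ci g r x') x (dfh_dx ci g r x).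
Proof. intros Hd. unfold fh, dfh_dx. auto_derive; [exact Hd | field; exact Hd]. Qed.

Lemma is_derive_fh_R ci g r x : r + g * x ^ 2 <> 0 ->
  is_derive (fun r' => fh ci g r' x) r (dfh_dR ci g r x).
Proof. intros Hd. unfold fh, dfh_dR. auto_derive; [exact Hd | field; exact Hd]. Qed.

Section Paths.

Variables (G : R -> R) (ci t G' : R).
Hypothesis (HG : is_derive G t G').

Lemma is_derive_fh_path_gamma r : r + t * G t ^ 2 <> 0 ->
  is_derive (fun g' => fh ci g' r (G g')) t
    (dfh_dgamma ci t r (G t) + dfh_dx ci t r (G t) * G').
Proof.
  intros Hd. unfold fh, dfh_dgamma, dfh_dx. auto_derive.
  - repeat split; try (exists G'; exact HG).
    intros E; apply Hd; rewrite <- E; ring.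
  - replace (Derive (fun x => G x) t) with G' by (symmetry; apply is_derive_unique; exact HG).
    field. exact Hd.
Qed.

Lemma is_derive_fh_path_R g : t + g * G t ^ 2 <> 0 ->
  is_derive (fun r' => fh ci g r' (G r')) t
    (dfh_dR ci g t (G t) + dfh_dx ci g t (G t) * G').
Proof.
  intros Hd. unfold fh, dfh_dR, dfh_dx. auto_derive.
  - repeat split; try (exists G'; exact HG).
    intros E; apply Hd; rewrite <- E; ring.
  - replace (Derive (fun x => G x) t) with G' by (symmetry; apply is_derive_unique; exact HG).
    field. exact Hd.
Qed.

Lemma is_derive_share_path_gamma r : r + t * G t ^ 2 <> 0 -> G t <> 0 ->
  is_derive (fun g' => fh ci g' r (G g') / G g') t (dshare_dgamma ci t r (G t) G').
Proof.
  intros Hd HG0. unfold fh, dshare_dgamma. auto_derive.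
  - repeat split; try (exists G'; exact HG); [|exact HG0].
    intros E; apply Hd; rewrite <- E; ring.
  - replace (Derive (fun x => G x) t) with G' by (symmetry; apply is_derive_unique; exact HG).
    field. auto.
Qed.

Lemma is_derive_share_path_R g : t + g * G t ^ 2 <> 0 -> G t <> 0 ->
  is_derive (fun r' => fh ci g r' (G r') / G r') t (dshare_dR ci g t (G t) G').
Proof.
  intros Hd HG0. unfold fh, dshare_dR. auto_derive.
  - repeat split; try (exists G'; exact HG); [|exact HG0].
    intros E; apply Hd; rewrite <- E; ring.
  - replace (Derive (fun x => G x) t) with G' by (symmetry; apply is_derive_unique; exact HG).
    field. auto.
Qed.

End Paths.

Lemma dfh_dgamma_neg ci g r x :
  0 < x -> ci * x < r -> 0 < r + g * x ^ 2 -> dfh_dgamma ci g r x < 0.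
Proof.
  intros Hx Hcx HD. unfold dfh_dgamma, Rdiv.
  assert (0 < x ^ 3 * (r - ci * x)) by (apply Rmult_lt_0_compat; [apply pow_lt|]; lra).
  assert (0 < / (r + g * x ^ 2) ^ 2) by (apply Rinv_0_lt_compat, pow_lt; lra).
  nra.
Qed.

Lemma dfh_dR_pos ci g r x :
  0 < x -> 0 < ci -> 0 <= g -> 0 < r + g * x ^ 2 -> 0 < dfh_dR ci g r x.
Proof.
  intros Hx Hci Hg HD. unfold dfh_dR.
  apply Rdiv_lt_0_compat; [apply Rmult_lt_0_compat; nra | apply pow_lt; lra].
Qed.

(* Both sides say [r - 2 ci x - g x^2 < 0]. *)
Lemma dfh_dx_neg_iff_share_lt_half ci g r x :
  0 < r -> 0 < x -> 0 < r + g * x ^ 2 ->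
  (dfh_dx ci g r x < 0 <-> fh ci g r x / x < 1 / 2).
Proof.
  intros Hr Hx HD. set (q := r - 2 * ci * x - g * x ^ 2).
  set (k1 := r / (r + g * x ^ 2) ^ 2). set (k2 := / (2 * (r + g * x ^ 2))).
  assert (E1 : dfh_dx ci g r x = q * k1) by (unfold dfh_dx, q, k1; field; lra).
  assert (E2 : fh ci g r x / x = 1 / 2 + q * k2) by (unfold fh, q, k2; field; lra).
  assert (0 < k1) by (apply Rdiv_lt_0_compat; [lra | apply pow_lt; lra]).
  assert (0 < k2) by (apply Rinv_0_lt_compat; lra).
  rewrite E1, E2. split; intros; nra.
Qed.

Lemma dfh_dR_total_pos ci g r x b C :
  0 < x -> 0 < ci -> ci * x < r -> 0 <= g -> 0 < C -> g * x ^ 2 + C * x = b * r ->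
  0 < dfh_dR ci g r x + dfh_dx ci g r x * (b / (2 * g * x + C)).
Proof.
  intros Hx Hci Hcx Hg HC Hq.
  assert (Hr : 0 < r) by nra.
  assert (HD : 0 < r + g * x ^ 2) by nra.
  assert (HS : 0 < 2 * g * x + C) by nra.
  replace b with (x * (g * x + C) / r) by (apply (Rmult_eq_reg_r r); [|lra]; field_simplify; nra).
  replace (dfh_dR ci g r x + dfh_dx ci g r x * (x * (g * x + C) / r / (2 * g * x + C)))
    with (x * (g ^ 2 * x ^ 3 + g * x * r + C * (r - ci * x))
          / ((r + g * x ^ 2) ^ 2 * (2 * g * x + C)))
    by (unfold dfh_dR, dfh_dx; field; repeat split; lra).
  apply Rdiv_lt_0_compat; [|apply Rmult_lt_0_compat; [apply pow_lt|]; lra].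
  apply Rmult_lt_0_compat; [lra|].
  assert (0 <= g ^ 2 * x ^ 3) by (apply Rmult_le_pos; [nra | apply pow_le; lra]).
  assert (0 <= g * x * r) by (apply Rmult_le_pos; nra).
  nra.
Qed.

Lemma share_slope_gamma_nonneg g r x C :
  0 <= g -> 0 < r -> 0 < x -> 0 < C ->
  0 <= x ^ 3 + (g * x ^ 2 - r) * (- x ^ 2 / (2 * g * x + C)).
Proof.
  intros Hg Hr Hx HC. assert (HS : 0 < 2 * g * x + C) by nra.
  replace (x ^ 3 + (g * x ^ 2 - r) * (- x ^ 2 / (2 * g * x + C)))
    with (x ^ 2 * (g * x ^ 2 + C * x + r) / (2 * g * x + C)) by (field; lra).
  apply Rdiv_le_0_compat; [|exact HS].
  apply Rmult_le_pos; [nra|]. assert (0 <= g * x ^ 2) by (apply Rmult_le_pos; nra). nra.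
Qed.

Lemma share_slope_R_nonneg g r x b C :
  0 <= g -> 0 < r -> 0 < x -> 0 < C -> g * x ^ 2 + C * x = b * r ->
  0 <= x + (g * x ^ 2 - r) * (b / (2 * g * x + C)).
Proof.
  intros Hg Hr Hx HC Hq. assert (HS : 0 < 2 * g * x + C) by nra.
  replace b with ((g * x ^ 2 + C * x) / r) by (rewrite Hq; field; lra).
  replace (x + (g * x ^ 2 - r) * ((g * x ^ 2 + C * x) / r / (2 * g * x + C)))
    with (g * x ^ 2 * (g * x ^ 2 + C * x + r) / (r * (2 * g * x + C))) by (field; lra).
  apply Rdiv_le_0_compat; [|nra].
  assert (0 <= g * x ^ 2) by (apply Rmult_le_pos; nra).
  apply Rmult_le_pos; nra.
Qed.

Lemma dshare_dgamma_le_cost c1 c2 g r x x' :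
  0 < r + g * x ^ 2 -> 0 <= x ^ 3 + (g * x ^ 2 - r) * x' -> c1 <= c2 ->
  dshare_dgamma c1 g r x x' <= dshare_dgamma c2 g r x x'.
Proof.
  intros HD Hs Hc. unfold dshare_dgamma, Rdiv.
  apply Rmult_le_compat_r; [left; apply Rinv_0_lt_compat, pow_lt; lra | nra].
Qed.

Lemma dshare_dR_le_cost c1 c2 g r x x' :
  0 < r + g * x ^ 2 -> 0 <= x + (g * x ^ 2 - r) * x' -> c1 <= c2 ->
  dshare_dR c1 g r x x' <= dshare_dR c2 g r x x'.
Proof.
  intros HD Hs Hc. unfold dshare_dR, Rdiv.
  apply Rmult_le_compat_r; [left; apply Rinv_0_lt_compat, pow_lt; lra | nra].
Qed.

Lemma INR_sub1_pos n : (2 <= n)%nat -> 0 < INR n - 1.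
Proof. intros Hn. assert (2 <= INR n) by (apply (le_INR 2); lia). lra. Qed.

Section ClosedForm.

Variables (c : nat -> R) (n : nat) (gamma Rw x : R).
Hypotheses (Hn2 : (2 <= n)%nat) (HC : 0 < sumN c n) (HR : 0 < Rw) (Hgam : 0 <= gamma)
  (Hx : 0 < x) (Hquad : gamma * x ^ 2 + sumN c n * x = (INR n - 1) * Rw).

Local Notation C := (sumN c n).
Local Notation b := (INR n - 1).

Lemma denom_pos : 0 < Rw + gamma * x ^ 2.
Proof. nra. Qed.

Lemma slope_denom_pos : 0 < 2 * gamma * x + C.
Proof. nra. Qed.

Lemma discr_pos : 0 < C ^ 2 + 4 * b * Rw * gamma.
Proof. assert (0 <= gamma * x) by nra. nra. Qed.

Lemma sqrt_discr : sqrt (C ^ 2 + 4 * b * Rw * gamma) = 2 * gamma * x + C.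
Proof.
  replace (C ^ 2 + 4 * b * Rw * gamma) with ((2 * gamma * x + C) ^ 2) by nra.
  apply sqrt_pow2. nra.
Qed.

Lemma pos_root_eq : pos_root b C gamma Rw = x.
Proof.
  unfold pos_root. rewrite sqrt_discr.
  replace (2 * b * Rw) with (2 * x * (gamma * x + C)) by nra.
  field. nra.
Qed.

Lemma gH_root : gH c n gamma Rw = x.
Proof. rewrite gH_pos_root; [exact pos_root_eq | exact HC | left; exact discr_pos]. Qed.

Lemma gH_near_gamma : locally gamma (fun g' => pos_root b C g' Rw = gH c n g' Rw).
Proof.
  assert (Hb := INR_sub1_pos n Hn2).
  assert (Hrad : 0 < C ^ 2 / (4 * b * Rw)) by (apply Rdiv_lt_0_compat; nra).
  exists (mkposreal _ Hrad). intros g' Hg'.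
  change (Rabs (g' - gamma) < C ^ 2 / (4 * b * Rw)) in Hg'. apply Rabs_def2 in Hg'.
  symmetry. apply gH_pos_root; [exact HC|].
  assert (C ^ 2 / (4 * b * Rw) * (4 * b * Rw) = C ^ 2) by (field; nra).
  assert (0 < 4 * b * Rw) by nra.
  nra.
Qed.

Lemma gH_near_R : locally Rw (fun r' => pos_root b C gamma r' = gH c n gamma r').
Proof.
  assert (Hb := INR_sub1_pos n Hn2).
  exists (mkposreal _ HR). intros r' Hr'.
  change (Rabs (r' - Rw) < Rw) in Hr'. apply Rabs_def2 in Hr'.
  symmetry. apply gH_pos_root; [exact HC|].
  assert (0 <= b * r' * gamma) by (apply Rmult_le_pos; [apply Rmult_le_pos|]; lra).
  nra.
Qed.

Lemma is_derive_gH_gamma :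
  is_derive (fun g' => gH c n g' Rw) gamma (- x ^ 2 / (2 * gamma * x + C)).
Proof.
  apply (is_derive_ext_loc _ _ _ _ gH_near_gamma).
  rewrite <- sqrt_discr, <- pos_root_eq at 1.
  apply is_derive_pos_root_gamma; [exact HC | exact discr_pos].
Qed.

Lemma is_derive_gH_R :
  is_derive (fun r' => gH c n gamma r') Rw (b / (2 * gamma * x + C)).
Proof.
  apply (is_derive_ext_loc _ _ _ _ gH_near_R).
  rewrite <- sqrt_discr.
  apply is_derive_pos_root_R; [exact HC | exact discr_pos].
Qed.

Lemma Dg1_eq i : Dg1 c i gamma Rw x = dfh_dgamma (c i) gamma Rw x.
Proof. apply is_derive_unique, is_derive_fh_gamma, Rgt_not_eq, denom_pos. Qed.

Lemma Dg2_eq i :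
  Dg2 c n i gamma Rw x = dfh_dx (c i) gamma Rw x * (- x ^ 2 / (2 * gamma * x + C)).
Proof.
  unfold Dg2. f_equal; apply is_derive_unique;
    [apply is_derive_fh_x, Rgt_not_eq, denom_pos | exact is_derive_gH_gamma].
Qed.

Lemma DR1_eq i : DR1 c i gamma Rw x = dfh_dR (c i) gamma Rw x.
Proof. apply is_derive_unique, is_derive_fh_R, Rgt_not_eq, denom_pos. Qed.

Lemma DR2_eq i :
  DR2 c n i gamma Rw x = dfh_dx (c i) gamma Rw x * (b / (2 * gamma * x + C)).
Proof.
  unfold DR2. f_equal; apply is_derive_unique;
    [apply is_derive_fh_x, Rgt_not_eq, denom_pos | exact is_derive_gH_R].
Qed.

Lemma is_derive_hstar_gamma i :
  is_derive (fun g' => hstar c n i g' Rw) gamma (Dg1 c i gamma Rw x + Dg2 c n i gamma Rw x).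
Proof.
  rewrite Dg1_eq, Dg2_eq. unfold hstar.
  assert (Hd := is_derive_fh_path_gamma _ (c i) _ _ is_derive_gH_gamma Rw).
  cbv beta in Hd. rewrite gH_root in Hd. apply Hd, Rgt_not_eq, denom_pos.
Qed.

Lemma is_derive_hstar_R i :
  is_derive (fun r' => hstar c n i gamma r') Rw (DR1 c i gamma Rw x + DR2 c n i gamma Rw x).
Proof.
  rewrite DR1_eq, DR2_eq. unfold hstar.
  assert (Hd := is_derive_fh_path_R _ (c i) _ _ is_derive_gH_R gamma).
  cbv beta in Hd. rewrite gH_root in Hd. apply Hd, Rgt_not_eq, denom_pos.
Qed.

Lemma is_derive_share_gamma i :
  is_derive (fun g' => hstar c n i g' Rw / gH c n g' Rw) gamma
    (dshare_dgamma (c i) gamma Rw x (- x ^ 2 / (2 * gamma * x + C))).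
Proof.
  unfold hstar.
  assert (Hd := is_derive_share_path_gamma _ (c i) _ _ is_derive_gH_gamma Rw).
  cbv beta in Hd. rewrite gH_root in Hd. apply Hd; [apply Rgt_not_eq, denom_pos | lra].
Qed.

Lemma is_derive_share_R i :
  is_derive (fun r' => hstar c n i gamma r' / gH c n gamma r') Rw
    (dshare_dR (c i) gamma Rw x (b / (2 * gamma * x + C))).
Proof.
  unfold hstar.
  assert (Hd := is_derive_share_path_R _ (c i) _ _ is_derive_gH_R gamma).
  cbv beta in Hd. rewrite gH_root in Hd. apply Hd; [apply Rgt_not_eq, denom_pos | lra].
Qed.

Lemma hstar_comparative_statics i : 0 < c i -> c i * x < Rw ->
  is_derive (fun g' => hstar c n i g' Rw) gamma (Dg1 c i gamma Rw x + Dg2 c n i gamma Rw x) /\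
  Dg1 c i gamma Rw x < 0 /\
  (0 < Dg2 c n i gamma Rw x <-> fh (c i) gamma Rw x / x < 1 / 2) /\
  is_derive (fun r' => hstar c n i gamma r') Rw (DR1 c i gamma Rw x + DR2 c n i gamma Rw x) /\
  0 < DR1 c i gamma Rw x + DR2 c n i gamma Rw x /\
  0 < DR1 c i gamma Rw x /\
  (DR2 c n i gamma Rw x < 0 <-> fh (c i) gamma Rw x / x < 1 / 2).
Proof.
  intros Hci Hcx.
  assert (HD := denom_pos). assert (HS := slope_denom_pos).
  assert (Hb := INR_sub1_pos n Hn2).
  assert (Hslope_g : - x ^ 2 / (2 * gamma * x + C) < 0)
    by (unfold Rdiv; rewrite Ropp_mult_distr_l_reverse;
        apply Ropp_lt_gt_0_contravar, Rdiv_lt_0_compat; [apply pow_lt|]; lra).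
  assert (Hslope_R : 0 < b / (2 * gamma * x + C)) by (apply Rdiv_lt_0_compat; lra).
  rewrite <- (dfh_dx_neg_iff_share_lt_half (c i) gamma Rw x HR Hx HD).
  split; [apply is_derive_hstar_gamma|]. rewrite Dg1_eq, Dg2_eq.
  split; [apply dfh_dgamma_neg; assumption|].
  split; [split; intros; nra|].
  split; [apply is_derive_hstar_R|]. rewrite DR1_eq, DR2_eq.
  split; [apply (dfh_dR_total_pos _ _ _ _ b C); lra|].
  split; [apply dfh_dR_pos; lra|].
  split; intros; nra.
Qed.

Lemma share_derivatives_increasing :
  (forall i, (i + 1 < n)%nat -> c i <= c (i + 1)%nat) ->
  exists dg dR : nat -> R,
    (forall i : nat, (i < n)%nat ->
       is_derive (fun g' => hstar c n i g' Rw / gH c n g' Rw) gamma (dg i) /\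
       is_derive (fun r' => hstar c n i gamma r' / gH c n gamma r') Rw (dR i)) /\
    (forall i : nat, (i + 1 < n)%nat -> dg i <= dg (i + 1)%nat /\ dR i <= dR (i + 1)%nat).
Proof.
  intros Hmono.
  exists (fun i => dshare_dgamma (c i) gamma Rw x (- x ^ 2 / (2 * gamma * x + C))).
  exists (fun i => dshare_dR (c i) gamma Rw x (b / (2 * gamma * x + C))).
  split.
  - intros i _. split; [apply is_derive_share_gamma | apply is_derive_share_R].
  - intros i Hi. split.
    + apply dshare_dgamma_le_cost; [exact denom_pos | | exact (Hmono i Hi)].
      apply share_slope_gamma_nonneg; lra.
    + apply dshare_dR_le_cost; [exact denom_pos | | exact (Hmono i Hi)].
      apply share_slope_R_nonneg; lra.
Qed.

End ClosedForm.

Theorem proposition4p6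
  (N n : nat) (c : nat -> R) (gamma Rw : R) (h : nat -> R)
  (HN : (2 <= N)%nat) (Hn2 : (2 <= n)%nat) (HnN : (n <= N)%nat)
  (Hc : sorted_costs N c) (HR : 0 < Rw) (Hgam : 0 <= gamma)
  (HNE : is_NE N c gamma Rw h)
  (Hact : forall i : nat, (i < N)%nat -> (0 < h i <-> (i < n)%nat))
  (Hstable : exists eps : R, 0 < eps /\
     forall (c' : nat -> R) (gamma' Rw' : R) (h' : nat -> R),
       (forall j : nat, (j < N)%nat -> Rabs (c' j - c j) < eps) ->
       Rabs (gamma' - gamma) < eps -> Rabs (Rw' - Rw) < eps ->
       sorted_costs N c' -> 0 <= gamma' -> 0 < Rw' ->
       is_NE N c' gamma' Rw' h' ->
       forall i : nat, (i < N)%nat -> (0 < h' i <-> (i < n)%nat)) :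
  (forall i : nat, (i < n)%nat ->
     let Hs := Htot N h in
     is_derive (fun g' => hstar c n i g' Rw) gamma
       (Dg1 c i gamma Rw Hs + Dg2 c n i gamma Rw Hs) /\
     Dg1 c i gamma Rw Hs < 0 /\
     (0 < Dg2 c n i gamma Rw Hs <-> h i / Hs < 1 / 2) /\
     is_derive (fun r' => hstar c n i gamma r') Rw
       (DR1 c i gamma Rw Hs + DR2 c n i gamma Rw Hs) /\
     0 < DR1 c i gamma Rw Hs + DR2 c n i gamma Rw Hs /\
     0 < DR1 c i gamma Rw Hs /\
     (DR2 c n i gamma Rw Hs < 0 <-> h i / Hs < 1 / 2)) /\
  (exists dg dR : nat -> R,
     (forall i : nat, (i < n)%nat ->
        is_derive (fun g' => hstar c n i g' Rw / gH c n g' Rw) gamma (dg i) /\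
        is_derive (fun r' => hstar c n i gamma r' / gH c n gamma r') Rw (dR i)) /\
     (forall i : nat, (i + 1 < n)%nat -> dg i <= dg (i + 1)%nat /\ dR i <= dR (i + 1)%nat)).
Proof.
  (* [Hstable] only justifies holding [n] fixed, as the closed forms already do. *)
  clear Hstable.
  assert (Hcpos := sorted_costs_pos N c Hc).
  assert (HC : 0 < sumN c n).
  { apply Rlt_le_trans with (c 0%nat); [apply Hcpos; lia|].
    apply sumN_ge_term; [intros; left; apply Hcpos|]; lia. }
  assert (HH := Htot_pos N n c gamma Rw h Hn2 HnN HNE Hact).
  assert (Hquad := Htot_quadratic N n c gamma Rw h Hn2 HnN HNE Hact).
  split.
  - intros i Hi; cbv zeta.
    rewrite (active_fh N n c gamma Rw h Hn2 HnN HR Hgam HNE Hact i Hi).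
    apply (hstar_comparative_statics c n gamma Rw (Htot N h)); try assumption.
    + apply Hcpos; lia.
    + exact (active_cost_lt N n c gamma Rw h Hn2 HnN HR Hgam HNE Hact i Hi).
  - apply (share_derivatives_increasing c n gamma Rw (Htot N h)); try assumption.
    intros i Hi. apply Hc. lia.
Qed.
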